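(* Let $\mathcal{X}\subseteq\mathcal{P}(\mathbb{N})$ be closed under enumeration equivalence. If $f\colon\mathcal{X}\to\mathcal{P}(\mathbb{N})$ is uniformly $e$-invariant, then $f$ has a computable uniformity function.
   Context: Enumeration reducibility: for $A,B\subseteq\mathbb{N}$, $A\le_e B$ if $A=\Gamma(B):=\{n:\exists D\subseteq B,\ \langle n,D\rangle\in\Gamma\}$ for some c.e. set $\Gamma$ of pairs $\langle n,D\rangle$ with $D$ finite (canonical index); $(\Gamma_i)_{i\in\mathbb{N}}$ is the standard computable numbering of these enumeration operators. $A\equiv_e B$ iff $A\le_e B\le_e A$. Let $\mathcal{X}\subseteq\mathcal{P}(\mathbb{N})$ be closed under $\equiv_e$. A function $f\colon\mathcal{X}\to\mathcal{P}(\mathbb{N})$ is $e$-invariant if $A\equiv_e B$ implies $f(A)\equiv_e f(B)$. Write $A\equiv_e B$ via $\langle i,j\rangle$ if $\Gamma_i(A)=B$ and $\Gamma_j(B)=A$ (with $\langle\cdot,\cdot\rangle$ a fixed computable pairing bijection). A function $u\colon\mathbb{N}\to\mathbb{N}$ is a uniformity function for $f$ if for all $A,B\in\mathcal{X}$ and all $i,j$, whenever $A\equiv_e B$ via $\langle i,j\rangle$ then $f(A)\equiv_e f(B)$ via $u(\langle i,j\rangle)$. $f$ is uniformly $e$-invariant if it has some uniformity function. *)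

From Stdlib Require Import Arith.

Definition cpair (i j : nat) : nat := (i + j) * (i + j + 1) / 2 + j.

(* Codes of unary partial recursive functions *)
Inductive code : Type :=
| CZero : code
| CSucc : code
| CProj1 : code
| CProj2 : code
| CPair : code -> code -> code
| CComp : code -> code -> code
| CPrim : code -> code -> code      (* h <x,0> = f x ; h <x,n+1> = g <x,<n,h <x,n>>> *)
| CMu : code -> code.               (* x |-> least n with f <x,n> = 0 (all earlier defined) *)

Inductive eval : code -> nat -> nat -> Prop :=
| ev_zero : forall x, eval CZero x 0
| ev_succ : forall x, eval CSucc x (S x)
| ev_proj1 : forall a b, eval CProj1 (cpair a b) a
| ev_proj2 : forall a b, eval CProj2 (cpair a b) b
| ev_pair : forall f g x a b, eval f x a -> eval g x b -> eval (CPair f g) x (cpair a b)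
| ev_comp : forall f g x a y, eval g x a -> eval f a y -> eval (CComp f g) x y
| ev_prim0 : forall f g x y, eval f x y -> eval (CPrim f g) (cpair x 0) y
| ev_primS : forall f g x n r y,
    eval (CPrim f g) (cpair x n) r -> eval g (cpair x (cpair n r)) y ->
    eval (CPrim f g) (cpair x (S n)) y
| ev_mu : forall f x n,
    eval f (cpair x n) 0 ->
    (forall m, m < n -> exists k, eval f (cpair x m) (S k)) ->
    eval (CMu f) x n.

(* Goedel numbering of codes (injective); numbers not of the form
   [encode c] index the everywhere-undefined function. *)
Fixpoint encode (c : code) : nat :=
  match c with
  | CZero => cpair 0 0
  | CSucc => cpair 1 0
  | CProj1 => cpair 2 0
  | CProj2 => cpair 3 0
  | CPair f g => cpair 4 (cpair (encode f) (encode g))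
  | CComp f g => cpair 5 (cpair (encode f) (encode g))
  | CPrim f g => cpair 6 (cpair (encode f) (encode g))
  | CMu f => cpair 7 (encode f)
  end.

Definition phi (e x y : nat) : Prop := exists c, encode c = e /\ eval c x y.

Definition computable (u : nat -> nat) : Prop :=
  exists c : code, forall n, eval c n (u n).

Definition eset := nat -> Prop.

Definition W (e : nat) : eset := fun x => exists y, phi e x y.

(* D_u : finite set with canonical index u (binary expansion) *)
Definition canon (u : nat) : eset := fun k => Nat.testbit u k = true.

Definition Gamma (e : nat) (A : eset) : eset :=
  fun n => exists u, W e (cpair n u) /\ (forall k, canon u k -> A k).

Definition ered (A B : eset) : Prop := exists i, Gamma i B = A.
Definition eequiv (A B : eset) : Prop := ered A B /\ ered B A.

Definition eequiv_via (A B : eset) (ij : nat) : Prop :=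
  exists i j, ij = cpair i j /\ Gamma i A = B /\ Gamma j B = A.

Definition closed_eequiv (X : eset -> Prop) : Prop :=
  forall A B, X A -> eequiv A B -> X B.

Definition uniformity_function (X : eset -> Prop) (f : eset -> eset)
    (u : nat -> nat) : Prop :=
  forall A B i j, X A -> X B -> eequiv_via A B (cpair i j) ->
    eequiv_via (f A) (f B) (u (cpair i j)).

Definition uniformly_e_invariant (X : eset -> Prop) (f : eset -> eset) : Prop :=
  exists u, uniformity_function X f u.

From Stdlib Require Import Arith Lia List Bool Setoid FunctionalExtensionality PropExtensionality.
Import ListNotations.

(* Mark a set by a number: A (+) {c}.  There are fixed operator pairs taking
   A to A (+) {0} and A (+) {c} to A (+) {c+1}, and, since the marker can be
   read by the operator, one fixed pair taking A (+) {<i,j>} to B (+) {<i,j>}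
   whenever A =e B via <i,j>.  All these sets lie in X by closure.  Applying
   the given uniformity function u to the three fixed pairs yields six fixed
   indices, and composing them along
     f A -> f (A (+) {0}) -> ... -> f (A (+) {<i,j>}) -> f (B (+) {<i,j>}) -> ... -> f B
   gives an equivalence f A =e f B whose index depends on <i,j> only through
   the number of steps, hence computably.  Composition of operators is itself
   an enumeration operator, found by searching for derivations that certify
   membership in the sets W_e. *)

(** * Cantor pairing *)

Definition triangle (k : nat) := k * (k + 1) / 2.

Lemma triangle_S k : triangle (S k) = triangle k + S k.
Proof.
  unfold triangle.
  replace (S k * (S k + 1)) with (k * (k + 1) + S k * 2) by lia.
  now rewrite Nat.div_add by lia.
Qed.

Lemma cpair_triangle i j : cpair i j = triangle (i + j) + j.
Proof. reflexivity. Qed.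

Lemma triangle_mono a b : a <= b -> triangle a <= triangle b.
Proof. induction 1; auto. rewrite triangle_S. lia. Qed.

Lemma cpair_lt_sum a b c d : a + b < c + d -> cpair a b < cpair c d.
Proof.
  intro H. rewrite !cpair_triangle.
  assert (triangle (S (a + b)) <= triangle (c + d)) by (apply triangle_mono; lia).
  rewrite triangle_S in *. lia.
Qed.

Lemma cpair_inj a b c d : cpair a b = cpair c d -> a = c /\ b = d.
Proof.
  intro H.
  destruct (lt_eq_lt_dec (a + b) (c + d)) as [[h|h]|h].
  - apply cpair_lt_sum in h. lia.
  - rewrite !cpair_triangle, h in H. lia.
  - apply cpair_lt_sum in h. lia.
Qed.

(* Walks the enumeration <0,0>, <1,0>, <0,1>, <2,0>, ... of [cpair]. *)
Fixpoint unpair (x : nat) : nat * nat :=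
  match x with
  | 0 => (0, 0)
  | S x' => let (a, b) := unpair x' in
            match a with 0 => (S b, 0) | S a' => (a', S b) end
  end.

Definition cfst x := fst (unpair x).
Definition csnd x := snd (unpair x).

Lemma cpair_cfst_csnd x : cpair (cfst x) (csnd x) = x.
Proof.
  unfold cfst, csnd. induction x as [|x IH]; [reflexivity|].
  simpl. destruct (unpair x) as [[|a] b]; simpl in *; rewrite !cpair_triangle in *.
  - replace (S b + 0) with (S b) by lia. rewrite triangle_S. simpl in IH. lia.
  - replace (a + S b) with (S a + b) by lia. lia.
Qed.

Lemma cfst_cpair a b : cfst (cpair a b) = a.
Proof. exact (proj1 (cpair_inj _ _ _ _ (cpair_cfst_csnd (cpair a b)))). Qed.

Lemma csnd_cpair a b : csnd (cpair a b) = b.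
Proof. exact (proj2 (cpair_inj _ _ _ _ (cpair_cfst_csnd (cpair a b)))). Qed.

Lemma cpair_eta x : x = cpair (cfst x) (csnd x).
Proof. symmetry; apply cpair_cfst_csnd. Qed.

Global Opaque cpair.

Ltac cpair_simpl := repeat progress (rewrite ?cfst_cpair, ?csnd_cpair, ?cpair_cfst_csnd).
Ltac cpair_simpl_in H := repeat progress (rewrite ?cfst_cpair, ?csnd_cpair, ?cpair_cfst_csnd in H).

(** * Codes without minimisation are total *)

Fixpoint prim_rec (f g : nat -> nat) (x n : nat) : nat :=
  match n with 0 => f x | S m => g (cpair x (cpair m (prim_rec f g x m))) end.

Fixpoint mu_free (c : code) : Prop :=
  match c with
  | CPair f g | CComp f g | CPrim f g => mu_free f /\ mu_free g
  | CMu _ => False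
  | _ => True
  end.

(* Junk value [0] on [CMu]: [den] is only meaningful on [mu_free] codes. *)
Fixpoint den (c : code) (x : nat) : nat :=
  match c with
  | CZero => 0
  | CSucc => S x
  | CProj1 => cfst x
  | CProj2 => csnd x
  | CPair f g => cpair (den f x) (den g x)
  | CComp f g => den f (den g x)
  | CPrim f g => prim_rec (den f) (den g) (cfst x) (csnd x)
  | CMu _ => 0
  end.

Lemma eval_den c x : mu_free c -> eval c x (den c x).
Proof.
  revert x; induction c; simpl; intros x Hm; try tauto.
  - constructor.
  - constructor.
  - rewrite (cpair_eta x) at 1. constructor.
  - rewrite (cpair_eta x) at 1. constructor.
  - apply ev_pair; [apply IHc1 | apply IHc2]; tauto.
  - econstructor; [apply IHc2 | apply IHc1]; tauto.
  - destruct Hm as [H1 H2]. rewrite (cpair_eta x) at 1.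
    induction (csnd x) as [|n IHn]; simpl; econstructor; eauto.
Qed.

Lemma eval_mu_free_det c x y : mu_free c -> eval c x y -> y = den c x.
Proof.
  intros Hm H; induction H; simpl in *; cpair_simpl; try tauto.
  - destruct Hm. f_equal; auto.
  - destruct Hm. rewrite IHeval2, IHeval1 by auto. auto.
  - destruct Hm. rewrite IHeval2, IHeval1 by auto. now cpair_simpl.
Qed.

Lemma eval_mu_freeE c x y : mu_free c -> eval c x y <-> y = den c x.
Proof. split; [now apply eval_mu_free_det | intros ->; now apply eval_den]. Qed.

(** * A small expression language compiled to codes *)

(* Variables are de Bruijn indices into an environment; [Iter] binds the
   accumulator (index 0) and the step counter (index 1), [ExLt] its witness. *)
Inductive expr : Type :=
| Var (k : nat) | Const (n : nat) | Succ (e : expr) | Pred (e : expr)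
| Pair (a b : expr) | Fst (e : expr) | Snd (e : expr)
| IfZero (c a b : expr) | Iter (count init step : expr) | ExLt (bound body : expr)
| Let (a body : expr).

Fixpoint iter_idx (n i : nat) (s : nat -> nat -> nat) : nat :=
  match n with 0 => i | S m => s m (iter_idx m i s) end.

Fixpoint any_below (n : nat) (f : nat -> nat) : nat :=
  match n with
  | 0 => 0
  | S m => match any_below m f with
           | 0 => match f m with 0 => 0 | _ => 1 end
           | _ => 1
           end
  end.

Fixpoint eval_expr (e : expr) (env : list nat) : nat :=
  match e with
  | Var k => nth k env 0
  | Const n => n
  | Succ e => S (eval_expr e env)
  | Pred e => pred (eval_expr e env)
  | Pair a b => cpair (eval_expr a env) (eval_expr b env)
  | Fst e => cfst (eval_expr e env)
  | Snd e => csnd (eval_expr e env)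
  | IfZero c a b => match eval_expr c env with 0 => eval_expr a env | _ => eval_expr b env end
  | Iter n i s => iter_idx (eval_expr n env) (eval_expr i env) (fun m r => eval_expr s (r :: m :: env))
  | ExLt n body => any_below (eval_expr n env) (fun m => eval_expr body (m :: env))
  | Let a body => eval_expr body (eval_expr a env :: env)
  end.

(* Environments are passed to compiled code as right-nested pairs. *)
Fixpoint encode_env (l : list nat) : nat :=
  match l with [] => 0 | v :: l => cpair v (encode_env l) end.

Fixpoint const_code (n : nat) : code :=
  match n with 0 => CZero | S m => CComp CSucc (const_code m) end.

Fixpoint env_proj_code (k : nat) : code :=
  match k with 0 => CProj1 | S k => CComp (env_proj_code k) CProj2 end.

Definition id_code := CPair CProj1 CProj2.
Definition pred_code := CComp (CPrim CZero (CComp CProj1 CProj2)) (CPair CZero id_code).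
Definition or_step_code :=
  CComp (CPrim (CComp (CPrim CZero (CComp (CComp CSucc CZero) CProj1)) (CPair id_code CProj2))
               (CComp (CComp CSucc CZero) CProj1))
        (CPair id_code CProj1).

(* [IfZero], [Iter] and [ExLt] all become primitive recursions over the value
   of the condition, count or bound, paired with the environment. *)
Fixpoint compile (e : expr) : code :=
  match e with
  | Var k => env_proj_code k
  | Const n => const_code n
  | Succ e => CComp CSucc (compile e)
  | Pred e => CComp pred_code (compile e)
  | Pair a b => CPair (compile a) (compile b)
  | Fst e => CComp CProj1 (compile e)
  | Snd e => CComp CProj2 (compile e)
  | IfZero c a b =>
      CComp (CPrim (compile a) (CComp (compile b) CProj1)) (CPair id_code (compile c))
  | Iter n i s =>
      CComp (CPrim (compile i)
                   (CComp (compile s)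
                          (CPair (CComp CProj2 CProj2) (CPair (CComp CProj1 CProj2) CProj1))))
            (CPair id_code (compile n))
  | ExLt n body =>
      CComp (CPrim CZero
                   (CComp or_step_code
                          (CPair (CComp CProj2 CProj2)
                                 (CComp (compile body) (CPair (CComp CProj1 CProj2) CProj1)))))
            (CPair id_code (compile n))
  | Let a body => CComp (compile body) (CPair (compile a) id_code)
  end.

Lemma den_id_code x : den id_code x = x.
Proof. apply cpair_cfst_csnd. Qed.

Lemma den_const_code n x : den (const_code n) x = n.
Proof. induction n; simpl; auto. Qed.

Lemma den_env_proj_code k l : den (env_proj_code k) (encode_env l) = nth k l 0.
Proof.
  revert l; induction k as [|k IHk]; intros [|v l]; simpl; cpair_simpl; auto.
  specialize (IHk []). destruct k; exact IHk.
Qed.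

Lemma den_pred_code x : den pred_code x = pred x.
Proof. unfold pred_code; simpl; cpair_simpl. destruct x; simpl; now cpair_simpl. Qed.

Lemma den_or_step_code r v :
  den or_step_code (cpair r v) = match r, v with 0, 0 => 0 | _, _ => 1 end.
Proof. unfold or_step_code. simpl; cpair_simpl. destruct r, v; simpl; now cpair_simpl. Qed.

Lemma mu_free_helper_codes : mu_free id_code /\ mu_free pred_code /\ mu_free or_step_code.
Proof. simpl; tauto. Qed.

Global Opaque id_code pred_code or_step_code.

Lemma compile_correct e l : den (compile e) (encode_env l) = eval_expr e l.
Proof.
  revert l; induction e as [k|n|e IHe|e IHe|a IHa b IHb|e IHe|e IHe|c IHc a IHa b IHb
                            |n IHn i IHi s IHs|n IHn body IHbody|a IHa body IHbody];
    intro l; simpl; rewrite ?den_id_code; cpair_simpl.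
  - apply den_env_proj_code.
  - apply den_const_code.
  - now rewrite IHe.
  - now rewrite den_pred_code, IHe.
  - now rewrite IHa, IHb.
  - now rewrite IHe.
  - now rewrite IHe.
  - rewrite IHc. destruct (eval_expr c l); simpl; cpair_simpl; auto.
  - rewrite IHn. induction (eval_expr n l) as [|m IHm]; simpl; auto.
    cpair_simpl. rewrite IHm. exact (IHs (_ :: m :: l)).
  - rewrite IHn. induction (eval_expr n l) as [|m IHm]; simpl; auto.
    cpair_simpl. rewrite IHm, den_or_step_code.
    change (cpair m (encode_env l)) with (encode_env (m :: l)). now rewrite IHbody.
  - change (cpair (den (compile a) (encode_env l)) (encode_env l))
      with (encode_env (den (compile a) (encode_env l) :: l)).
    now rewrite IHbody, IHa.
Qed.

Lemma mu_free_const_code n : mu_free (const_code n).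
Proof. induction n; simpl; auto. Qed.

Lemma mu_free_compile e : mu_free (compile e).
Proof.
  pose proof mu_free_helper_codes. pose proof mu_free_const_code.
  assert (forall k, mu_free (env_proj_code k)) by (induction k; simpl; auto).
  induction e; simpl; auto; tauto.
Qed.

(** * Arithmetic and logic inside the expression language *)

Definition holds (e : expr) (env : list nat) : Prop := eval_expr e env <> 0.

Definition Plus a b := Iter b a (Succ (Var 0)).
Definition Minus a b := Iter b a (Pred (Var 0)).
Definition Double x := Plus x x.
Definition Not a := IfZero a (Const 1) (Const 0).
Definition And a b := IfZero a (Const 0) (IfZero b (Const 0) (Const 1)).
Definition Or a b := IfZero a (IfZero b (Const 0) (Const 1)) (Const 1).
Definition Implies a b := IfZero a (Const 1) (IfZero b (Const 0) (Const 1)).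
Definition EqNat a b := Not (Plus (Minus a b) (Minus b a)).
Definition AllLt n body := Not (ExLt n (Not body)).
Definition Odd x := Iter x (Const 0) (Not (Var 0)).
Definition Div2 x :=
  Fst (Iter x (Pair (Const 0) (Const 0))
            (IfZero (Snd (Var 0)) (Pair (Fst (Var 0)) (Const 1))
                                  (Pair (Succ (Fst (Var 0))) (Const 0)))).
Definition TestBit d k := Odd (Iter k d (Div2 (Var 0))).

(* Lists are stored as right-nested pairs, as in [encode_env]. *)
Definition cnth (s p : nat) : nat := cfst (iter_idx p s (fun _ r => csnd r)).
Definition Nth s p := Fst (Iter p s (Snd (Var 0))).

Lemma iter_idx_ext n i s1 s2 :
  (forall m r, s1 m r = s2 m r) -> iter_idx n i s1 = iter_idx n i s2.
Proof. intro H; induction n; simpl; congruence. Qed.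

Lemma any_below_ext n f1 f2 : (forall m, f1 m = f2 m) -> any_below n f1 = any_below n f2.
Proof. intro H; induction n; simpl; auto. now rewrite IHn, H. Qed.

Lemma iter_idx_shift k d (g : nat -> nat) :
  iter_idx (S k) d (fun _ r => g r) = iter_idx k (g d) (fun _ r => g r).
Proof. induction k; simpl in *; congruence. Qed.

Lemma cnth_encode_env l q : cnth (encode_env l) q = nth q l 0.
Proof.
  unfold cnth. revert q; induction l as [|v l IHl]; intros [|q].
  - reflexivity.
  - assert (Z : forall n, iter_idx n 0 (fun _ r => csnd r) = 0)
      by (induction n; simpl; [|rewrite IHn]; reflexivity).
    simpl. now rewrite Z.
  - simpl. now cpair_simpl.
  - rewrite iter_idx_shift. simpl. rewrite csnd_cpair. apply IHl.
Qed.

Lemma eval_Plus env a b : eval_expr (Plus a b) env = eval_expr a env + eval_expr b env.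
Proof. unfold Plus; simpl. induction (eval_expr b env); simpl; lia. Qed.

Lemma eval_Minus env a b : eval_expr (Minus a b) env = eval_expr a env - eval_expr b env.
Proof.
  unfold Minus; simpl. induction (eval_expr b env) as [|n IHn]; simpl; [lia|]. rewrite IHn; lia.
Qed.

Lemma eval_Double env x : eval_expr (Double x) env = 2 * eval_expr x env.
Proof. unfold Double. rewrite eval_Plus. lia. Qed.

Lemma holds_Not env a : holds (Not a) env <-> ~ holds a env.
Proof. unfold holds; simpl. destruct (eval_expr a env); intuition congruence. Qed.

Lemma Not_eq_0 env a : eval_expr (Not a) env = 0 <-> holds a env.
Proof. unfold holds; simpl. destruct (eval_expr a env); intuition congruence. Qed.

Lemma holds_And env a b : holds (And a b) env <-> holds a env /\ holds b env.
Proof. unfold holds; simpl. destruct (eval_expr a env), (eval_expr b env); intuition congruence. Qed.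

Lemma holds_Or env a b : holds (Or a b) env <-> holds a env \/ holds b env.
Proof. unfold holds; simpl. destruct (eval_expr a env), (eval_expr b env); intuition congruence. Qed.

Lemma holds_Implies env a b : holds (Implies a b) env <-> (holds a env -> holds b env).
Proof. unfold holds; simpl. destruct (eval_expr a env), (eval_expr b env); intuition congruence. Qed.

Lemma holds_EqNat env a b : holds (EqNat a b) env <-> eval_expr a env = eval_expr b env.
Proof. unfold EqNat. rewrite holds_Not. unfold holds. rewrite eval_Plus, !eval_Minus. lia. Qed.

Lemma any_below_spec n f : any_below n f <> 0 <-> exists m, m < n /\ f m <> 0.
Proof.
  induction n as [|n IHn]; simpl.
  - split; [congruence | intros [m [Hm _]]; lia].
  - destruct (any_below n f) eqn:E.
    + destruct (f n) eqn:F; split.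
      * congruence.
      * intros [m [Hm Fm]]. destruct (Nat.eq_dec m n); [congruence|].
        apply (proj2 IHn). exists m. split; [lia | exact Fm].
      * intros _. exists n. split; [lia | congruence].
      * discriminate.
    + split; [intros _ | discriminate].
      destruct (proj1 IHn ltac:(discriminate)) as [m [Hm Fm]]. exists m. split; [lia | auto].
Qed.

Lemma holds_ExLt env n body :
  holds (ExLt n body) env <-> exists m, m < eval_expr n env /\ holds body (m :: env).
Proof. apply (any_below_spec (eval_expr n env)). Qed.

Lemma holds_AllLt env n body :
  holds (AllLt n body) env <-> forall m, m < eval_expr n env -> holds body (m :: env).
Proof.
  unfold AllLt. rewrite holds_Not, holds_ExLt. setoid_rewrite holds_Not.
  split; [intros H m Hm | intros H [m [Hm Hb]]]; [|now apply Hb, H].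
  unfold holds. destruct (Nat.eq_dec (eval_expr body (m :: env)) 0); [|auto].
  exfalso. apply H. exists m. unfold holds. tauto.
Qed.

Lemma holds_Odd env x : holds (Odd x) env <-> Nat.odd (eval_expr x env) = true.
Proof.
  unfold holds, Odd; simpl.
  induction (eval_expr x env) as [|n IHn]; simpl; [split; [congruence | discriminate]|].
  rewrite Nat.odd_succ, <- Nat.negb_odd.
  destruct (iter_idx n 0 _), (Nat.odd n); simpl in *; intuition congruence.
Qed.

Lemma eval_Div2 env x : eval_expr (Div2 x) env = Nat.div2 (eval_expr x env).
Proof.
  unfold Div2; simpl.
  enough (E : forall n, iter_idx n (cpair 0 0) (fun _ r =>
             match csnd r with 0 => cpair (cfst r) 1 | S _ => cpair (S (cfst r)) 0 end)
           = cpair (Nat.div2 n) (Nat.b2n (Nat.odd n))) by (rewrite E; now cpair_simpl).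
  induction n as [|n IHn]; [reflexivity|]. simpl. rewrite IHn. cpair_simpl.
  pose proof (Nat.div2_odd n). pose proof (Nat.div2_odd (S n)).
  rewrite Nat.odd_succ, <- Nat.negb_odd in *.
  destruct (Nat.odd n); simpl in *; f_equal; lia.
Qed.

Global Opaque Plus Minus Double Not And Or Implies EqNat AllLt Odd Div2.

Lemma holds_TestBit env d k :
  holds (TestBit d k) env <-> Nat.testbit (eval_expr d env) (eval_expr k env) = true.
Proof.
  unfold TestBit. rewrite holds_Odd. simpl.
  rewrite (iter_idx_ext _ _ _ (fun _ r => Nat.div2 r)) by (intros; apply eval_Div2).
  generalize (eval_expr d env). induction (eval_expr k env) as [|n IHn]; intro a; [reflexivity|].
  simpl. rewrite <- IHn, <- iter_idx_shift. reflexivity.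
Qed.

Lemma eval_Nth env s p : eval_expr (Nth s p) env = cnth (eval_expr s env) (eval_expr p env).
Proof. reflexivity. Qed.

Global Opaque TestBit Nth.

Fixpoint lift (c : nat) (e : expr) : expr :=
  match e with
  | Var k => if c <=? k then Var (S k) else Var k
  | Const n => Const n
  | Succ e => Succ (lift c e)
  | Pred e => Pred (lift c e)
  | Pair a b => Pair (lift c a) (lift c b)
  | Fst e => Fst (lift c e)
  | Snd e => Snd (lift c e)
  | IfZero a b d => IfZero (lift c a) (lift c b) (lift c d)
  | Iter a b d => Iter (lift c a) (lift c b) (lift (S (S c)) d)
  | ExLt a b => ExLt (lift c a) (lift (S c) b)
  | Let a b => Let (lift c a) (lift (S c) b)
  end.

Definition insert_at (c v : nat) (env : list nat) := firstn c env ++ v :: skipn c env.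

Lemma eval_lift e : forall c env v, c <= length env ->
  eval_expr (lift c e) (insert_at c v env) = eval_expr e env.
Proof.
  induction e; intros c env v Hc; simpl;
    try (rewrite ?IHe, ?IHe1, ?IHe2, ?IHe3 by auto; reflexivity).
  - unfold insert_at. rewrite <- (firstn_skipn c env) at 3.
    assert (Hlen : length (firstn c env) = c) by (rewrite length_firstn; lia).
    destruct (Nat.leb_spec c k); simpl.
    + rewrite !app_nth2 by lia. rewrite Hlen.
      now replace (S k - c) with (S (k - c)) by lia.
    + rewrite !app_nth1 by lia. reflexivity.
  - rewrite IHe1, IHe2 by auto. apply iter_idx_ext. intros m r.
    apply (IHe3 (S (S c)) (r :: m :: env)). simpl; lia.
  - rewrite IHe1 by auto. apply any_below_ext. intro m. apply (IHe2 (S c) (m :: env)). simpl; lia.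
  - rewrite IHe1 by auto. apply (IHe2 (S c) (_ :: env)). simpl; lia.
Qed.

Definition shift := lift 0.

Lemma eval_shift e v env : eval_expr (shift e) (v :: env) = eval_expr e env.
Proof. exact (eval_lift e 0 env v (Nat.le_0_l _)). Qed.

Global Opaque shift.

Definition AmongFirst (s p t : expr) := ExLt p (EqNat (Nth (shift s) (Var 0)) (shift t)).

Lemma holds_AmongFirst env s p t : holds (AmongFirst s p t) env <->
  exists q, q < eval_expr p env /\ cnth (eval_expr s env) q = eval_expr t env.
Proof.
  unfold AmongFirst. rewrite holds_ExLt. setoid_rewrite holds_EqNat.
  setoid_rewrite eval_Nth. now setoid_rewrite eval_shift.
Qed.

Global Opaque AmongFirst.

(** * Derivations certifying convergence *)

(* Judgments: [jeval e x y] asserts that code number [e] maps [x] to [y],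
   [jcode e] that [e] is the number of a code.  A derivation is a list of
   judgments each of which follows by one rule from earlier ones;
   [Earlier P] means that some earlier line satisfies [P], and [t], [r] are
   the constructor tag and the arguments of the code number [cpair t r]. *)
Definition jeval e x y := cpair 0 (cpair e (cpair x y)).
Definition jcode e := cpair 1 (cpair e (cpair 0 0)).

Definition eval_rule (t r x y : nat) (Earlier : (nat -> Prop) -> Prop) : Prop :=
  let Has j := Earlier (fun j' => j' = j) in
  (t = 0 /\ r = 0 /\ y = 0) \/
  (t = 1 /\ r = 0 /\ y = S x) \/
  (t = 2 /\ r = 0 /\ y = cfst x) \/
  (t = 3 /\ r = 0 /\ y = csnd x) \/
  (t = 4 /\ Has (jeval (cfst r) x (cfst y)) /\ Has (jeval (csnd r) x (csnd y))) \/
  (t = 5 /\ Earlier (fun j => cfst j = 0 /\ cfst (csnd j) = csnd r /\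
      cfst (csnd (csnd j)) = x /\ Has (jeval (cfst r) (csnd (csnd (csnd j))) y))) \/
  (t = 6 /\ ((csnd x = 0 /\ Has (jeval (cfst r) (cfst x) y) /\ Has (jcode (csnd r))) \/
             (csnd x <> 0 /\ Earlier (fun j => cfst j = 0 /\ cfst (csnd j) = cpair t r /\
                cfst (csnd (csnd j)) = cpair (cfst x) (pred (csnd x)) /\
                Has (jeval (csnd r) (cpair (cfst x) (cpair (pred (csnd x)) (csnd (csnd (csnd j)))))
                           y))))) \/
  (t = 7 /\ Has (jeval r (cpair x y) 0) /\
     forall m, m < y -> Earlier (fun j => cfst j = 0 /\ cfst (csnd j) = r /\
        cfst (csnd (csnd j)) = cpair x m /\ csnd (csnd (csnd j)) <> 0)).

Definition code_rule (t r : nat) (Earlier : (nat -> Prop) -> Prop) : Prop :=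
  let Has j := Earlier (fun j' => j' = j) in
  ((t = 0 \/ t = 1 \/ t = 2 \/ t = 3) /\ r = 0) \/
  ((t = 4 \/ t = 5 \/ t = 6) /\ Has (jcode (cfst r)) /\ Has (jcode (csnd r))) \/
  (t = 7 /\ Has (jcode r)).

Definition follows (J : nat) (Earlier : (nat -> Prop) -> Prop) : Prop :=
  let e := cfst (csnd J) in
  (cfst J = 0 /\ eval_rule (cfst e) (csnd e) (cfst (csnd (csnd J))) (csnd (csnd (csnd J))) Earlier) \/
  (cfst J = 1 /\ code_rule (cfst e) (csnd e) Earlier).

Definition line_follows (f : nat -> nat) (p : nat) : Prop :=
  follows (f p) (fun P => exists q, q < p /\ P (f q)).

(* A candidate derivation is a list [s] of length [len], read via [f := cnth s]. *)
Definition derivation_for (f : nat -> nat) (len e x : nat) : Prop :=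
  (forall p, p < len -> line_follows f p) /\
  exists p, p < len /\ cfst (f p) = 0 /\ cfst (csnd (f p)) = e /\ cfst (csnd (csnd (f p))) = x.

(* [eval_rule] transcribed clause by clause, with [Earlier] the first [p] lines of [s]. *)
Definition EvalRule (s p : expr) : expr :=
  let J := Nth s p in
  let e := Fst (Snd J) in let x := Fst (Snd (Snd J)) in let y := Snd (Snd (Snd J)) in
  let t := Fst e in let r := Snd e in
  let JEval a b c := Pair (Const 0) (Pair a (Pair b c)) in
  let JCode a := Pair (Const 1) (Pair a (Pair (Const 0) (Const 0))) in
  let Has j := AmongFirst s p j in
  let Is a n := EqNat a (Const n) in
  Or (And (Is t 0) (And (Is r 0) (Is y 0)))
  (Or (And (Is t 1) (And (Is r 0) (EqNat y (Succ x))))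
  (Or (And (Is t 2) (And (Is r 0) (EqNat y (Fst x))))
  (Or (And (Is t 3) (And (Is r 0) (EqNat y (Snd x))))
  (Or (And (Is t 4) (And (Has (JEval (Fst r) x (Fst y))) (Has (JEval (Snd r) x (Snd y)))))
  (Or (And (Is t 5) (ExLt p (let L := Nth (shift s) (Var 0) in
         And (EqNat (Fst L) (Const 0)) (And (EqNat (Fst (Snd L)) (shift (Snd r)))
           (And (EqNat (Fst (Snd (Snd L))) (shift x))
             (AmongFirst (shift s) (shift p) (JEval (shift (Fst r)) (Snd (Snd (Snd L))) (shift y))))))))
  (Or (And (Is t 6) (Or (And (Is (Snd x) 0) (And (Has (JEval (Fst r) (Fst x) y)) (Has (JCode (Snd r)))))
         (And (Not (Is (Snd x) 0)) (ExLt p (let L := Nth (shift s) (Var 0) in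
            And (EqNat (Fst L) (Const 0)) (And (EqNat (Fst (Snd L)) (shift (Pair t r)))
              (And (EqNat (Fst (Snd (Snd L))) (shift (Pair (Fst x) (Pred (Snd x)))))
                (AmongFirst (shift s) (shift p)
                   (JEval (shift (Snd r))
                          (Pair (shift (Fst x)) (Pair (shift (Pred (Snd x))) (Snd (Snd (Snd L)))))
                          (shift y))))))))))
      (And (Is t 7) (And (Has (JEval r (Pair x y) (Const 0)))
         (AllLt y (ExLt (shift p) (let L := Nth (shift (shift s)) (Var 0) in
            And (EqNat (Fst L) (Const 0)) (And (EqNat (Fst (Snd L)) (shift (shift r)))
              (And (EqNat (Fst (Snd (Snd L))) (Pair (shift (shift x)) (Var 1)))
                (Not (Is (Snd (Snd (Snd L))) 0))))))))))))))).

Definition CodeRule (s p : expr) : expr :=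
  let e := Fst (Snd (Nth s p)) in let t := Fst e in let r := Snd e in
  let JCode a := Pair (Const 1) (Pair a (Pair (Const 0) (Const 0))) in
  let Has j := AmongFirst s p j in
  let Is a n := EqNat a (Const n) in
  Or (And (Or (Is t 0) (Or (Is t 1) (Or (Is t 2) (Is t 3)))) (Is r 0))
  (Or (And (Or (Is t 4) (Or (Is t 5) (Is t 6))) (And (Has (JCode (Fst r))) (Has (JCode (Snd r)))))
      (And (Is t 7) (Has (JCode r)))).

Definition LineFollows (s p : expr) : expr :=
  Or (And (EqNat (Fst (Nth s p)) (Const 0)) (EvalRule s p))
     (And (EqNat (Fst (Nth s p)) (Const 1)) (CodeRule s p)).

Ltac holds_simpl := repeat first
  [ setoid_rewrite holds_Or | setoid_rewrite holds_And | setoid_rewrite holds_Not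
  | setoid_rewrite holds_EqNat | setoid_rewrite holds_ExLt | setoid_rewrite holds_AllLt
  | setoid_rewrite holds_AmongFirst | setoid_rewrite eval_shift | setoid_rewrite eval_Nth ].

Lemma holds_LineFollows env s p :
  holds (LineFollows s p) env <-> line_follows (cnth (eval_expr s env)) (eval_expr p env).
Proof.
  unfold LineFollows, EvalRule, CodeRule, line_follows, follows, eval_rule, code_rule.
  cbv beta zeta. holds_simpl. cbn [eval_expr]. holds_simpl. cbn [eval_expr nth]. reflexivity.
Qed.

(* Environment layout: the candidate derivation [w = cpair len s], then [x], then [e]. *)
Definition IsDerivation : expr :=
  And (AllLt (Fst (Var 0)) (LineFollows (Snd (Var 1)) (Var 0)))
      (ExLt (Fst (Var 0)) (let J := Nth (Snd (Var 1)) (Var 0) in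
         And (EqNat (Fst J) (Const 0))
             (And (EqNat (Fst (Snd J)) (Var 3)) (EqNat (Fst (Snd (Snd J))) (Var 2))))).

Lemma holds_IsDerivation w x e rest :
  holds IsDerivation (w :: x :: e :: rest) <-> derivation_for (cnth (csnd w)) (cfst w) e x.
Proof.
  unfold IsDerivation, derivation_for. rewrite holds_And, holds_AllLt, holds_ExLt.
  setoid_rewrite holds_LineFollows. holds_simpl. cbn [eval_expr nth]. reflexivity.
Qed.

Global Opaque IsDerivation.

(** * Soundness of derivations *)

Lemma encode_inj c1 c2 : encode c1 = encode c2 -> c1 = c2.
Proof.
  revert c2; induction c1; destruct c2; simpl; intro H; apply cpair_inj in H;
    destruct H as [H1 H2]; try discriminate; auto;
    try (apply cpair_inj in H2; destruct H2; f_equal; auto).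
  f_equal; auto.
Qed.

Definition judgment_sound (J : nat) : Prop :=
  (cfst J = 0 -> exists c, encode c = cfst (csnd J) /\
                  eval c (cfst (csnd (csnd J))) (csnd (csnd (csnd J)))) /\
  (cfst J = 1 -> exists c, encode c = cfst (csnd J)).

Section RuleSoundness.

Variable Earlier : (nat -> Prop) -> Prop.
Hypothesis premises_sound : forall P, Earlier P -> exists j, P j /\ judgment_sound j.

Lemma earlier_eval (P : nat -> Prop) : Earlier (fun j => cfst j = 0 /\ P j) ->
  exists j, P j /\ exists c, encode c = cfst (csnd j) /\
                            eval c (cfst (csnd (csnd j))) (csnd (csnd (csnd j))).
Proof.
  intro H. destruct (premises_sound _ H) as [j [[H0 Pj] [Hs _]]]. eauto.
Qed.

Lemma earlier_jeval a b c :
  Earlier (fun j => j = jeval a b c) -> exists cd, encode cd = a /\ eval cd b c.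
Proof.
  intro H. destruct (premises_sound _ H) as [j [-> [Hs _]]].
  destruct Hs as [cd Hcd]; [unfold jeval; apply cfst_cpair|].
  exists cd. unfold jeval in Hcd. now cpair_simpl_in Hcd.
Qed.

Lemma earlier_jcode a : Earlier (fun j => j = jcode a) -> exists cd, encode cd = a.
Proof.
  intro H. destruct (premises_sound _ H) as [j [-> [_ Hs]]].
  destruct Hs as [cd Hcd]; [unfold jcode; apply cfst_cpair|].
  exists cd. unfold jcode in Hcd. now cpair_simpl_in Hcd.
Qed.

Lemma eval_rule_sound t r x y :
  eval_rule t r x y Earlier -> exists c, encode c = cpair t r /\ eval c x y.
Proof.
  unfold eval_rule. intros [[-> [-> ->]]|[[-> [-> ->]]|[[-> [-> ->]]|[[-> [-> ->]]|[R|[R|[R|R]]]]]]].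
  - exists CZero. split; [reflexivity | constructor].
  - exists CSucc. split; [reflexivity | constructor].
  - exists CProj1. split; [reflexivity|]. rewrite (cpair_eta x) at 1. constructor.
  - exists CProj2. split; [reflexivity|]. rewrite (cpair_eta x) at 1. constructor.
  - destruct R as [-> [Hf Hg]].
    destruct (earlier_jeval _ _ _ Hf) as [cf [Ef Vf]], (earlier_jeval _ _ _ Hg) as [cg [Eg Vg]].
    exists (CPair cf cg). split; [simpl; now rewrite Ef, Eg, cpair_cfst_csnd|].
    rewrite (cpair_eta y). now constructor.
  - destruct R as [-> H].
    destruct (earlier_eval _ H) as [j [[Hr [Hx Hf]] [cg [Eg Vg]]]].
    destruct (earlier_jeval _ _ _ Hf) as [cf [Ef Vf]]. rewrite Hr in Eg. rewrite Hx in Vg.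
    exists (CComp cf cg). split; [|econstructor; eauto].
    simpl. now rewrite Ef, Eg, cpair_cfst_csnd.
  - destruct R as [-> [[Hn [Hf Hg]]|[Hn H]]].
    + destruct (earlier_jeval _ _ _ Hf) as [cf [Ef Vf]], (earlier_jcode _ Hg) as [cg Eg].
      exists (CPrim cf cg). split; [simpl; now rewrite Ef, Eg, cpair_cfst_csnd|].
      rewrite (cpair_eta x), Hn. now constructor.
    + destruct (earlier_eval _ H) as [j [[He [Hx Hg]] [c' [E' V']]]].
      destruct (earlier_jeval _ _ _ Hg) as [cg [Eg Vg]]. rewrite He in E'. rewrite Hx in V'.
      destruct c'; simpl in E'; apply cpair_inj in E'; destruct E' as [E6 Eargs]; try discriminate.
      rewrite <- Eargs, csnd_cpair in Eg. apply encode_inj in Eg. subst c'2.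
      exists (CPrim c'1 cg). split; [simpl; now rewrite Eargs|].
      replace x with (cpair (cfst x) (S (pred (csnd x)))) by (rewrite (cpair_eta x) at 3; f_equal; lia).
      econstructor; eauto.
  - destruct R as [-> [Hf Hall]].
    destruct (earlier_jeval _ _ _ Hf) as [cf [<- Vf]].
    exists (CMu cf). split; [reflexivity|]. constructor; auto.
    intros m Hm. destruct (earlier_eval _ (Hall m Hm)) as [j [[Hr [Hx Hy]] [cm [Em Vm]]]].
    rewrite Hr in Em. apply encode_inj in Em. subst cm. rewrite Hx in Vm.
    destruct (csnd (csnd (csnd j))) as [|k]; [congruence | eauto].
Qed.

Lemma code_rule_sound t r : code_rule t r Earlier -> exists c, encode c = cpair t r.
Proof.
  unfold code_rule. intros [[Ht ->]|[[Ht [Hf Hg]]|[-> Hf]]].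
  - destruct Ht as [-> | [-> | [-> | ->]]];
      [(exists CZero) | (exists CSucc) | (exists CProj1) | (exists CProj2)]; reflexivity.
  - destruct (earlier_jcode _ Hf) as [cf Ef], (earlier_jcode _ Hg) as [cg Eg].
    destruct Ht as [-> | [-> | ->]];
      [(exists (CPair cf cg)) | (exists (CComp cf cg)) | (exists (CPrim cf cg))];
      simpl; now rewrite Ef, Eg, cpair_cfst_csnd.
  - destruct (earlier_jcode _ Hf) as [cf <-]. now exists (CMu cf).
Qed.

Lemma follows_sound J : follows J Earlier -> judgment_sound J.
Proof.
  unfold follows, judgment_sound. intros [[H0 R]|[H1 R]]; split; intro Hk; try lia.
  - rewrite (cpair_eta (cfst (csnd J))). now apply eval_rule_sound.
  - rewrite (cpair_eta (cfst (csnd J))). now apply code_rule_sound.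
Qed.

End RuleSoundness.

Lemma derivation_sound f len :
  (forall p, p < len -> line_follows f p) -> forall p, p < len -> judgment_sound (f p).
Proof.
  intros V p. induction p as [p IH] using (well_founded_induction lt_wf). intro Hp.
  apply follows_sound with (Earlier := fun P => exists q, q < p /\ P (f q)); [|now apply V].
  intros P [q [Hq Pq]]. exists (f q). split; [exact Pq | apply IH; lia].
Qed.

(** * Completeness of derivations *)

Section Monotonicity.

Variables Earlier1 Earlier2 : (nat -> Prop) -> Prop.
Hypothesis earlier_mono :
  forall P Q : nat -> Prop, (forall j, P j -> Q j) -> Earlier1 P -> Earlier2 Q.

Lemma follows_mono J : follows J Earlier1 -> follows J Earlier2.
Proof.
  assert (H' : forall P, Earlier1 P -> Earlier2 P) by (intros P; apply earlier_mono; auto).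
  unfold follows, eval_rule, code_rule. cbv zeta.
  intros [[k C]|[k C]]; [left|right]; split; auto.
  - destruct C as [c|[c|[c|[c|[c|[c|[c|c]]]]]]].
    + left; auto.
    + right; left; auto.
    + do 2 right; left; auto.
    + do 3 right; left; auto.
    + do 4 right; left; intuition auto.
    + do 5 right; left. destruct c as [c1 c2]. split; auto.
      eapply earlier_mono; [|exact c2]. intros j Hj; cbv beta in *; intuition auto.
    + do 6 right; left. destruct c as [c1 [[c2 [c3 c4]]|[c2 c3]]].
      * split; auto.
      * split; auto. right. split; auto.
        eapply earlier_mono; [|exact c3]. intros j Hj; cbv beta in *; intuition auto.
    + do 7 right. destruct c as [c1 [c2 c3]]. split; [auto|]. split; [auto|].
      intros m Hm. eapply earlier_mono; [|exact (c3 m Hm)]. auto.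
  - intuition auto.
Qed.

End Monotonicity.

Definition derivation (l : list nat) : Prop :=
  forall p, p < length l -> line_follows (fun q => nth q l 0) p.

Definition among (l : list nat) (P : nat -> Prop) : Prop :=
  exists q, q < length l /\ P (nth q l 0).

Lemma among_In l j (P : nat -> Prop) : In j l -> P j -> among l P.
Proof. intros I Pj. destruct (In_nth l j 0 I) as [q [Hq E]]. exists q. now rewrite E. Qed.

Lemma derivation_nil : derivation [].
Proof. intros p Hp. simpl in Hp. lia. Qed.

Lemma line_follows_shift f g p k :
  line_follows f p -> (forall q, q <= p -> f q = g (q + k)) -> line_follows g (p + k).
Proof.
  unfold line_follows. intros V H. rewrite (H p (le_n p)) in V.
  eapply follows_mono; [|exact V].
  intros P Q PQ [q [Hq HP]]. exists (q + k). split; [lia|]. apply PQ.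
  rewrite <- H; auto. lia.
Qed.

Lemma derivation_app_l l1 l2 p :
  derivation l1 -> p < length l1 -> line_follows (fun q => nth q (l1 ++ l2) 0) p.
Proof.
  intros D Hp. replace p with (p + 0) by lia. apply line_follows_shift with (f := fun q => nth q l1 0).
  - now apply D.
  - intros q Hq. rewrite app_nth1 by lia. f_equal; lia.
Qed.

Lemma derivation_app l1 l2 : derivation l1 -> derivation l2 -> derivation (l1 ++ l2).
Proof.
  intros D1 D2 p Hp. rewrite length_app in Hp.
  destruct (lt_dec p (length l1)); [now apply derivation_app_l|].
  replace p with ((p - length l1) + length l1) by lia.
  apply line_follows_shift with (f := fun q => nth q l2 0).
  - apply D2; lia.
  - intros q Hq. rewrite app_nth2 by lia. f_equal; lia.
Qed.

Definition derivable (J : nat) : Prop := exists l, derivation l /\ In J l.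

Lemma derivable_from l J : derivation l -> follows J (among l) -> derivable J.
Proof.
  intros D V. exists (l ++ [J]). split; [|apply in_or_app; right; left; reflexivity].
  intros p Hp. rewrite length_app in Hp. simpl in Hp.
  destruct (lt_dec p (length l)); [now apply derivation_app_l|].
  assert (p = length l) by lia. subst p. unfold line_follows.
  rewrite nth_middle. eapply follows_mono; [|exact V].
  intros P Q PQ [q [Hq HP]]. exists q. split; auto. rewrite app_nth1 by lia. auto.
Qed.

Lemma derivations_combine (g : nat -> nat -> nat) n :
  (forall m, m < n -> exists k, derivable (g m k)) ->
  exists L, derivation L /\ forall m, m < n -> exists k, In (g m k) L.
Proof.
  induction n as [|n IHn]; intro H.
  - exists []. split; [apply derivation_nil | intros; lia].
  - destruct IHn as [L [DL HL]]; [intros m Hm; apply H; lia|].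
    destruct (H n (le_n _)) as [k [l [Dl Hk]]].
    exists (L ++ l). split; [now apply derivation_app|].
    intros m Hm. destruct (Nat.eq_dec m n) as [->|].
    + exists k. apply in_or_app; auto.
    + destruct (HL m) as [k' Hk']; [lia|]. exists k'. apply in_or_app; auto.
Qed.

Ltac open_judgment :=
  unfold follows, eval_rule, code_rule, jeval, jcode; cbv beta zeta; cbn [encode]; cpair_simpl.

Ltac among_by j :=
  apply among_In with j; [auto using in_or_app | cbv beta; unfold jeval, jcode; cpair_simpl].

Lemma jcode_derivable c : derivable (jcode (encode c)).
Proof.
  induction c as [| | | |f [l1 [D1 I1]] g [l2 [D2 I2]]|f [l1 [D1 I1]] g [l2 [D2 I2]]
                  |f [l1 [D1 I1]] g [l2 [D2 I2]]|f [l1 [D1 I1]]].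
  1-4: apply (derivable_from []); [apply derivation_nil|];
    open_judgment; right; split; [reflexivity|]; left; split; [tauto | reflexivity].
  1-3: apply (derivable_from (l1 ++ l2)); [now apply derivation_app|];
    open_judgment; right; split; [reflexivity|]; right; left;
    split; [tauto|]; split; [among_by (jcode (encode f)) | among_by (jcode (encode g))]; reflexivity.
  apply (derivable_from l1); [exact D1|].
  open_judgment; right; split; [reflexivity|]; right; right; split; [reflexivity|].
  among_by (jcode (encode f)). reflexivity.
Qed.

Section EvalRules.

Variables f g : code.

Lemma derivable_pair x a b :
  derivable (jeval (encode f) x a) -> derivable (jeval (encode g) x b) ->
  derivable (jeval (encode (CPair f g)) x (cpair a b)).
Proof.
  intros [l1 [D1 I1]] [l2 [D2 I2]]. apply (derivable_from (l1 ++ l2)); [now apply derivation_app|].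
  open_judgment; left; split; [reflexivity|]. do 4 right; left. split; [reflexivity|].
  split; [among_by (jeval (encode f) x a) | among_by (jeval (encode g) x b)]; reflexivity.
Qed.

Lemma derivable_comp x a y :
  derivable (jeval (encode g) x a) -> derivable (jeval (encode f) a y) ->
  derivable (jeval (encode (CComp f g)) x y).
Proof.
  intros [l1 [D1 I1]] [l2 [D2 I2]]. apply (derivable_from (l1 ++ l2)); [now apply derivation_app|].
  open_judgment; left; split; [reflexivity|]. do 5 right; left. split; [reflexivity|].
  among_by (jeval (encode g) x a). do 3 (split; [reflexivity|]).
  among_by (jeval (encode f) a y). reflexivity.
Qed.

Lemma derivable_prim0 x y :
  derivable (jeval (encode f) x y) -> derivable (jeval (encode (CPrim f g)) (cpair x 0) y).
Proof.
  intros [l1 [D1 I1]]. destruct (jcode_derivable g) as [l2 [D2 I2]].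
  apply (derivable_from (l1 ++ l2)); [now apply derivation_app|].
  open_judgment; left; split; [reflexivity|]. do 6 right; left. split; [reflexivity|].
  left. split; [reflexivity|].
  split; [among_by (jeval (encode f) x y) | among_by (jcode (encode g))]; reflexivity.
Qed.

Lemma derivable_primS x n r y :
  derivable (jeval (encode (CPrim f g)) (cpair x n) r) ->
  derivable (jeval (encode g) (cpair x (cpair n r)) y) ->
  derivable (jeval (encode (CPrim f g)) (cpair x (S n)) y).
Proof.
  intros [l1 [D1 I1]] [l2 [D2 I2]]. apply (derivable_from (l1 ++ l2)); [now apply derivation_app|].
  open_judgment; left; split; [reflexivity|]. do 6 right; left. split; [reflexivity|].
  right. split; [lia|].
  among_by (jeval (encode (CPrim f g)) (cpair x n) r). simpl pred.
  do 3 (split; [reflexivity|]). among_by (jeval (encode g) (cpair x (cpair n r)) y). reflexivity.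
Qed.

Lemma derivable_mu x n :
  derivable (jeval (encode f) (cpair x n) 0) ->
  (forall m, m < n -> exists k, derivable (jeval (encode f) (cpair x m) (S k))) ->
  derivable (jeval (encode (CMu f)) x n).
Proof.
  intros [l1 [D1 I1]] Hbelow.
  destruct (derivations_combine (fun m k => jeval (encode f) (cpair x m) (S k)) n Hbelow)
    as [L [DL HL]].
  apply (derivable_from (l1 ++ L)); [now apply derivation_app|].
  open_judgment; left; split; [reflexivity|]. do 7 right. split; [reflexivity|]. split.
  - among_by (jeval (encode f) (cpair x n) 0). reflexivity.
  - intros m Hm. destruct (HL m Hm) as [k Hk].
    among_by (jeval (encode f) (cpair x m) (S k)). repeat split. discriminate.
Qed.

End EvalRules.

Lemma jeval_derivable : forall c x y, eval c x y -> derivable (jeval (encode c) x y).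
Proof.
  fix IH 4. intros c x y H.
  destruct H as [| | | |f g x a b H1 H2|f g x a y H1 H2|f g x y H1|f g x n r y H1 H2|f x n H1 H2].
  1-4: apply (derivable_from []); [apply derivation_nil|];
    open_judgment; left; split; [reflexivity|];
    first [ solve [left; repeat split; now cpair_simpl]
          | solve [right; left; repeat split; now cpair_simpl]
          | solve [do 2 right; left; repeat split; now cpair_simpl]
          | solve [do 3 right; left; repeat split; now cpair_simpl] ].
  - apply derivable_pair; eauto.
  - eapply derivable_comp; eauto.
  - apply derivable_prim0; eauto.
  - eapply derivable_primS; eauto.
  - apply derivable_mu; [eauto|].
    intros m Hm. destruct (H2 m Hm) as [k Hk]. eauto.
Qed.

(** * Enumeration operators given by search expressions *)

Lemma W_encode c x : W (encode c) x <-> exists y, eval c x y.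
Proof.
  unfold W, phi. split.
  - intros [y [c' [E H]]]. apply encode_inj in E. subst. eauto.
  - intros [y H]. eauto.
Qed.

Lemma W_iff_derivation e x : W e x <-> exists w, derivation_for (cnth (csnd w)) (cfst w) e x.
Proof.
  split.
  - intros [y [c [Ec Hc]]]. destruct (jeval_derivable _ _ _ Hc) as [l [D I]].
    exists (cpair (length l) (encode_env l)). cpair_simpl.
    replace (cnth (encode_env l)) with (fun q => nth q l 0)
      by (apply functional_extensionality; intro; symmetry; apply cnth_encode_env).
    split; [exact D|].
    destruct (In_nth l _ 0 I) as [p [Hp Ep]]. exists p. rewrite Ep, <- Ec.
    unfold jeval. now cpair_simpl.
  - intros [w [V [p [Hp [H0 [He Hx]]]]]].
    destruct (derivation_sound _ _ V p Hp) as [S0 _]. destruct (S0 H0) as [c [Ec Hc]].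
    exists (csnd (csnd (csnd (cnth (csnd w) p)))), c. rewrite <- He, <- Hx. auto.
Qed.

Definition Derives (e x w : expr) : expr :=
  Let e (Let (shift x) (Let (shift (shift w)) IsDerivation)).

Lemma holds_Derives env e x w :
  holds (Derives e x w) env <->
  derivation_for (cnth (csnd (eval_expr w env))) (cfst (eval_expr w env))
                 (eval_expr e env) (eval_expr x env).
Proof. unfold Derives, holds. simpl. rewrite !eval_shift. apply holds_IsDerivation. Qed.

Global Opaque Derives.

(* The code of [x |-> least w with E [w; x] = 0]; only its domain matters. *)
Definition search_code (E : expr) : code :=
  CMu (CComp (compile E) (CPair CProj2 (CPair CProj1 CZero))).

Lemma search_code_dom E x : (exists y, eval (search_code E) x y) <-> exists w, eval_expr E [w; x] = 0.
Proof.
  set (body := CComp (compile E) (CPair CProj2 (CPair CProj1 CZero))).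
  assert (Hm : mu_free body) by (simpl; pose proof (mu_free_compile E); tauto).
  assert (Hd : forall w, den body (cpair x w) = eval_expr E [w; x]).
  { intro w. simpl. cpair_simpl. rewrite <- compile_correct. reflexivity. }
  split.
  - intros [y Hy]. inversion Hy as [| | | | | | | |f x' n H0 Hlt]; subst.
    exists y. rewrite <- Hd. symmetry. now apply eval_mu_free_det.
  - intros Hex.
    destruct (dec_inh_nat_subset_has_unique_least_element (fun w => eval_expr E [w; x] = 0))
      as [m [[Pm Hleast] _]];
      [intro n; destruct (Nat.eq_dec (eval_expr E [n; x]) 0); tauto | exact Hex|].
    exists m. constructor.
    + rewrite eval_mu_freeE by exact Hm. now rewrite Hd.
    + intros k Hk. destruct (den body (cpair x k)) as [|v] eqn:Ek.
      * rewrite Hd in Ek. specialize (Hleast k Ek). lia.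
      * exists v. rewrite <- Ek. now apply eval_den.
Qed.

Lemma Gamma_search_code E A n : Gamma (encode (search_code E)) A n <->
  exists u, (exists w, eval_expr E [w; cpair n u] = 0) /\ (forall k, Nat.testbit u k = true -> A k).
Proof. unfold Gamma, canon. setoid_rewrite W_encode. now setoid_rewrite search_code_dom. Qed.

(** * Operators on joins [A (+) {c}] *)

Lemma eset_ext (A B : eset) : (forall x, A x <-> B x) -> A = B.
Proof. intro H. apply functional_extensionality. intro x. now apply propositional_extensionality. Qed.

Definition join (A S : eset) : eset :=
  fun x => if Nat.even x then A (Nat.div2 x) else S (Nat.div2 x).

Definition single (c : nat) : eset := fun y => y = c.

Lemma odd_double k : Nat.odd (2 * k) = false.
Proof. rewrite <- Nat.negb_even, Nat.even_mul. reflexivity. Qed.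

Lemma odd_double_plus1 k : Nat.odd (2 * k + 1) = true.
Proof. rewrite Nat.add_comm, Nat.odd_add_mul_2. reflexivity. Qed.

Lemma div2_double_plus1 k : Nat.div2 (2 * k + 1) = k.
Proof. rewrite Nat.add_1_r. apply Nat.div2_succ_double. Qed.

Lemma join_double A S k : join A S (2 * k) = A k.
Proof. unfold join. now rewrite <- Nat.negb_odd, odd_double, Nat.div2_double. Qed.

Lemma join_double_plus1 A S k : join A S (2 * k + 1) = S k.
Proof. unfold join. now rewrite <- Nat.negb_odd, odd_double_plus1, div2_double_plus1. Qed.

Ltac parity_simpl :=
  rewrite ?odd_double, ?odd_double_plus1, ?Nat.div2_double, ?div2_double_plus1,
          ?join_double, ?join_double_plus1 in *.

Lemma testbit_pow2 k t : Nat.testbit (2 ^ k) t = true <-> t = k.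
Proof. rewrite Nat.pow2_bits_eqb, Nat.eqb_eq. split; auto. Qed.

Lemma testbit_lt u t : Nat.testbit u t = true -> t < u.
Proof.
  intro H. destruct (lt_dec t u) as [|Hge]; auto. exfalso.
  destruct u; [now rewrite Nat.bits_0 in H|].
  rewrite Nat.bits_above_log2 in H; [discriminate|].
  pose proof (Nat.log2_lt_lin (S u)). lia.
Qed.

Lemma bits_below_exists (P : nat -> bool) N :
  exists d, forall t, Nat.testbit d t = (t <? N) && P t.
Proof.
  induction N as [|N [d Hd]].
  - exists 0. intro t. now rewrite Nat.bits_0.
  - destruct (P N) eqn:PN; [exists (Nat.setbit d N) | exists d]; intro t;
      rewrite ?Nat.setbit_eqb, Hd;
      destruct (Nat.eqb_spec N t), (Nat.ltb_spec t N), (Nat.ltb_spec t (S N));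
      subst; simpl; rewrite ?PN; auto; lia.
Qed.

(* The expressions below describe [W_e] as a set of axioms [<n, u>] in the
   environment [[w; cpair n u]], where [w] is the search witness. *)
Definition Elem := Fst (Var 1).
Definition Index := Snd (Var 1).

Lemma eval_Elem w n u : eval_expr Elem [w; cpair n u] = n.
Proof. unfold Elem. simpl. now cpair_simpl. Qed.

Lemma eval_Index w n u : eval_expr Index [w; cpair n u] = u.
Proof. unfold Index. simpl. now cpair_simpl. Qed.

Global Opaque Elem Index.

Ltac expr_simpl :=
  repeat first [ setoid_rewrite Not_eq_0 | progress holds_simpl
               | setoid_rewrite holds_TestBit | setoid_rewrite holds_Odd
               | setoid_rewrite holds_Implies | setoid_rewrite holds_Derives
               | setoid_rewrite eval_Div2 | setoid_rewrite eval_Double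
               | setoid_rewrite eval_Plus | setoid_rewrite eval_Minus
               | setoid_rewrite eval_Elem | setoid_rewrite eval_Index ];
  cbn [eval_expr nth]; cpair_simpl; rewrite ?not_true_iff_false.

(* Axioms [<2k, {k}>] and [<1, {}>]: [A |-> A (+) {0}]. *)
Definition PadZero :=
  Not (Or (And (Not (Odd Elem)) (TestBit Index (Div2 Elem))) (EqNat Elem (Const 1))).

Lemma PadZero_spec w n u : eval_expr PadZero [w; cpair n u] = 0 <->
  (Nat.odd n = false /\ Nat.testbit u (Nat.div2 n) = true) \/ n = 1.
Proof. unfold PadZero. expr_simpl. reflexivity. Qed.

Lemma Gamma_pad_zero A : Gamma (encode (search_code PadZero)) A = join A (single 0).
Proof.
  apply eset_ext. intro x. rewrite Gamma_search_code. setoid_rewrite PadZero_spec.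
  destruct (Nat.Even_or_Odd x) as [[k ->]|[k ->]]; parity_simpl; split.
  - intros [u [[w [[_ Hb]|H1]] Hu]]; [now apply Hu | lia].
  - intro H. exists (2 ^ k). split.
    + exists 0. left. split; [reflexivity | now apply testbit_pow2].
    + intros t Ht. apply testbit_pow2 in Ht. now subst.
  - intros [u [[w [[H1 _]|H1]] Hu]]; [discriminate | unfold single; lia].
  - unfold single. intros ->. exists 0. split; [exists 0; now right|].
    intros t Ht. now rewrite Nat.bits_0 in Ht.
Qed.

(* Axioms [<n, {2n}>]: [A (+) S |-> A]. *)
Definition Left := Not (TestBit Index (Double Elem)).

Lemma Gamma_left A S : Gamma (encode (search_code Left)) (join A S) = A.
Proof.
  apply eset_ext. intro x. rewrite Gamma_search_code. unfold Left. expr_simpl. split.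
  - intros [u [[w Hb] Hu]]. apply Hu in Hb. now parity_simpl.
  - intro H. exists (2 ^ (2 * x)). split.
    + exists 0. now apply testbit_pow2.
    + intros k Hk. apply testbit_pow2 in Hk. subst. now parity_simpl.
Qed.

(* Axioms [<2k, {2k}>] and [<2k+1, {2k-1}>] for [k > 0]: [A (+) {c} |-> A (+) {c+1}]. *)
Definition Up :=
  Not (Or (And (Not (Odd Elem)) (TestBit Index Elem))
          (And (Odd Elem) (And (Not (EqNat (Div2 Elem) (Const 0)))
                               (TestBit Index (Minus Elem (Const 2)))))).

Lemma Up_spec w n u : eval_expr Up [w; cpair n u] = 0 <->
  (Nat.odd n = false /\ Nat.testbit u n = true) \/
  (Nat.odd n = true /\ Nat.div2 n <> 0 /\ Nat.testbit u (n - 2) = true).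
Proof. unfold Up. expr_simpl. reflexivity. Qed.

(* Axioms [<2k, {2k}>] and [<2k+1, {2k+3}>]: [A (+) {c+1} |-> A (+) {c}]. *)
Definition Down :=
  Not (Or (And (Not (Odd Elem)) (TestBit Index Elem))
          (And (Odd Elem) (TestBit Index (Plus Elem (Const 2))))).

Lemma Down_spec w n u : eval_expr Down [w; cpair n u] = 0 <->
  (Nat.odd n = false /\ Nat.testbit u n = true) \/
  (Nat.odd n = true /\ Nat.testbit u (n + 2) = true).
Proof. unfold Down. expr_simpl. reflexivity. Qed.

Lemma Gamma_up A c : Gamma (encode (search_code Up)) (join A (single c)) = join A (single (S c)).
Proof.
  apply eset_ext. intro x. rewrite Gamma_search_code. setoid_rewrite Up_spec. unfold single.
  destruct (Nat.Even_or_Odd x) as [[k ->]|[k ->]]; parity_simpl; split.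
  - intros [u [[w [[_ Hb]|[H _]]] Hu]]; [|discriminate]. apply Hu in Hb. now parity_simpl.
  - intro H. exists (2 ^ (2 * k)). split.
    + exists 0. left. split; [reflexivity | now apply testbit_pow2].
    + intros t Ht. apply testbit_pow2 in Ht. subst. now parity_simpl.
  - intros [u [[w [[H _]|[_ [Hk Hb]]]] Hu]]; [discriminate|].
    apply Hu in Hb. replace (2 * k + 1 - 2) with (2 * (k - 1) + 1) in Hb by lia.
    parity_simpl. lia.
  - intro H. exists (2 ^ (2 * (k - 1) + 1)). split.
    + exists 0. right. repeat split; [lia|]. apply testbit_pow2. lia.
    + intros t Ht. apply testbit_pow2 in Ht. subst. parity_simpl. lia.
Qed.

Lemma Gamma_down A c : Gamma (encode (search_code Down)) (join A (single (S c))) = join A (single c).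
Proof.
  apply eset_ext. intro x. rewrite Gamma_search_code. setoid_rewrite Down_spec. unfold single.
  destruct (Nat.Even_or_Odd x) as [[k ->]|[k ->]]; parity_simpl; split.
  - intros [u [[w [[_ Hb]|[H _]]] Hu]]; [|discriminate]. apply Hu in Hb. now parity_simpl.
  - intro H. exists (2 ^ (2 * k)). split.
    + exists 0. left. split; [reflexivity | now apply testbit_pow2].
    + intros t Ht. apply testbit_pow2 in Ht. subst. now parity_simpl.
  - intros [u [[w [[H _]|[_ Hb]]] Hu]]; [discriminate|].
    apply Hu in Hb. replace (2 * k + 1 + 2) with (2 * S k + 1) in Hb by lia.
    parity_simpl. lia.
  - intro H. exists (2 ^ (2 * S k + 1)). split.
    + exists 0. right. split; [reflexivity|]. apply testbit_pow2. lia.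
    + intros t Ht. apply testbit_pow2 in Ht. subst. parity_simpl. lia.
Qed.

(* Axioms [<2k+1, {2k+1}>] and [<2k, {2c+1} u 2D>] for [<k, D>] in [W_(sel c)]:
   [A (+) {c} |-> Gamma_(sel c)(A) (+) {c}].  The witness is [cpair c (cpair D w)]
   with [w] a derivation for [<k, D>]. *)
Definition ApplySel (sel : expr -> expr) :=
  let c := Fst (Var 0) in let D := Fst (Snd (Var 0)) in let w := Snd (Snd (Var 0)) in
  Not (Or
    (And (Not (Odd Elem))
       (And (TestBit Index (Succ (Double c)))
         (And (AllLt D (Implies (TestBit (shift D) (Var 0)) (TestBit (shift Index) (Double (Var 0)))))
              (Derives (sel c) (Pair (Div2 Elem) D) w))))
    (And (Odd Elem) (TestBit Index Elem))).

Section ApplySel.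

Variable sel : expr -> expr.
Variable sel_fun : nat -> nat.
Hypothesis eval_sel : forall e env, eval_expr (sel e) env = sel_fun (eval_expr e env).

Lemma ApplySel_spec w n u : eval_expr (ApplySel sel) [w; cpair n u] = 0 <->
  (Nat.odd n = false /\ Nat.testbit u (S (2 * cfst w)) = true /\
     (forall t, t < cfst (csnd w) -> Nat.testbit (cfst (csnd w)) t = true ->
                Nat.testbit u (2 * t) = true) /\
     derivation_for (cnth (csnd (csnd (csnd w)))) (cfst (csnd (csnd w)))
                    (sel_fun (cfst w)) (cpair (Nat.div2 n) (cfst (csnd w)))) \/
  (Nat.odd n = true /\ Nat.testbit u n = true).
Proof.
  unfold ApplySel. cbv zeta. expr_simpl.
  rewrite eval_Double, eval_sel, eval_Div2. cbn [eval_expr nth]. now rewrite eval_Elem.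
Qed.

Lemma Gamma_apply_sel A c :
  Gamma (encode (search_code (ApplySel sel))) (join A (single c)) =
  join (Gamma (sel_fun c) A) (single c).
Proof.
  apply eset_ext. intro x. rewrite Gamma_search_code. setoid_rewrite ApplySel_spec. unfold single.
  destruct (Nat.Even_or_Odd x) as [[k ->]|[k ->]]; parity_simpl; split.
  - intros [u [[w [[_ [Hc [HD Hw]]]|[H _]]] Hu]]; [|discriminate].
    apply Hu in Hc. rewrite <- Nat.add_1_r in Hc. parity_simpl. subst c.
    exists (cfst (csnd w)). split.
    + apply W_iff_derivation. eexists. exact Hw.
    + intros t Ht. specialize (HD t (testbit_lt _ _ Ht) Ht). apply Hu in HD. now parity_simpl.
  - intros [D [HW HD]]. apply W_iff_derivation in HW. destruct HW as [wt Hwt].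
    destruct (bits_below_exists (fun t => negb (Nat.odd t) && Nat.testbit D (Nat.div2 t)) (2 * D + 2))
      as [d Hd].
    exists (Nat.lor (2 ^ (2 * c + 1)) d). split.
    + exists (cpair c (cpair D wt)). left. cpair_simpl. split; [reflexivity|]. split; [|split].
      * replace (S (2 * c)) with (2 * c + 1) by lia.
        now rewrite Nat.lor_spec, (proj2 (testbit_pow2 _ _) eq_refl).
      * intros t Ht Hb. rewrite Nat.lor_spec, Hd. parity_simpl. rewrite Hb.
        rewrite (proj2 (Nat.ltb_lt (2 * t) (2 * D + 2))) by lia. apply orb_true_r.
      * exact Hwt.
    + intros t Ht. rewrite Nat.lor_spec in Ht. apply orb_true_iff in Ht.
      destruct Ht as [Ht|Ht].
      * apply testbit_pow2 in Ht. subst t. now parity_simpl.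
      * rewrite Hd in Ht. apply andb_true_iff in Ht. destruct Ht as [_ Ht].
        apply andb_true_iff in Ht. destruct Ht as [Hev HD'].
        destruct (Nat.Even_or_Odd t) as [[m ->]|[m ->]]; parity_simpl; [now apply HD | discriminate].
  - intros [u [[w [[H _]|[_ Hb]]] Hu]]; [discriminate|]. apply Hu in Hb. now parity_simpl.
  - intro Hk. exists (2 ^ (2 * k + 1)). split.
    + exists 0. right. split; [reflexivity | now apply testbit_pow2].
    + intros t Ht. apply testbit_pow2 in Ht. subst t. now parity_simpl.
Qed.

End ApplySel.

(** * Composition of enumeration operators *)

(* Axioms [<<<a, b>, x>, D>] for [x] in [Gamma_b(Gamma_a(D))].  The witness is
   [cpair E (cpair wb L)]: [wb] derives [<x, E>] in [W_b], and for every [k] in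
   [D_E] the entry [L[k] = cpair Ek wk] has [D_Ek] inside [D_D] and [wk]
   derives [<k, Ek>] in [W_a]. *)
Definition Compose : expr :=
  let a := Fst (Fst (Var 1)) in let b := Snd (Fst (Var 1)) in
  let x := Fst (Snd (Var 1)) in let D := Snd (Snd (Var 1)) in
  let E := Fst (Var 0) in let wb := Fst (Snd (Var 0)) in let L := Snd (Snd (Var 0)) in
  Not (And (Derives b (Pair x E) wb)
    (AllLt E (Implies (TestBit (shift E) (Var 0))
      (And (AllLt (Fst (Nth (shift L) (Var 0)))
                  (Implies (TestBit (Fst (Nth (shift (shift L)) (Var 1))) (Var 0))
                           (TestBit (shift (shift D)) (Var 0))))
           (Derives (shift a) (Pair (Var 0) (Fst (Nth (shift L) (Var 0))))
                    (Snd (Nth (shift L) (Var 0)))))))).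

Lemma Compose_spec w a b x D :
  eval_expr Compose [w; cpair (cpair a b) (cpair x D)] = 0 <->
  derivation_for (cnth (csnd (cfst (csnd w)))) (cfst (cfst (csnd w))) b (cpair x (cfst w)) /\
  forall k, k < cfst w -> Nat.testbit (cfst w) k = true ->
    let Lk := cnth (csnd (csnd w)) k in
    (forall t, t < cfst Lk -> Nat.testbit (cfst Lk) t = true -> Nat.testbit D t = true) /\
    derivation_for (cnth (csnd (csnd Lk))) (cfst (csnd Lk)) a (cpair k (cfst Lk)).
Proof.
  unfold Compose. cbv zeta. expr_simpl. reflexivity.
Qed.

Definition compose_index (a b : nat) : nat :=
  encode (CComp (search_code Compose) (CPair (CPair (const_code a) (const_code b)) id_code)).

Lemma W_compose_index a b x :
  W (compose_index a b) x <-> exists w, eval_expr Compose [w; cpair (cpair a b) x] = 0.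
Proof.
  unfold compose_index. rewrite W_encode, <- search_code_dom.
  set (pre := CPair (CPair (const_code a) (const_code b)) id_code).
  assert (Hm : mu_free pre)
    by (repeat split; apply mu_free_const_code || apply mu_free_helper_codes).
  assert (Hd : den pre x = cpair (cpair a b) x).
  { unfold pre. simpl. now rewrite !den_const_code, den_id_code. }
  split.
  - intros [y Hy]. inversion Hy as [| | | | |f g x' a' y' Hpre Hs| | |]; subst.
    apply eval_mu_free_det in Hpre; [|exact Hm]. rewrite Hd in Hpre. subst. eauto.
  - intros [y Hy]. exists y. econstructor; [|exact Hy]. rewrite <- Hd. now apply eval_den.
Qed.

Lemma list_choice (P : nat -> nat -> Prop) N :
  (forall k, k < N -> exists v, P k v) -> exists l, forall k, k < N -> P k (nth k l 0).
Proof.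
  induction N as [|N IHN]; intro H.
  - exists []. intros; lia.
  - destruct IHN as [l Hl]; [intros k Hk; apply H; lia|].
    destruct (H N (le_n _)) as [v Hv].
    exists (firstn N l ++ repeat 0 (N - length l) ++ [v]). intros k Hk.
    assert (Hlen : length (firstn N l ++ repeat 0 (N - length l)) = N)
      by (rewrite length_app, repeat_length, length_firstn; lia).
    rewrite app_assoc. destruct (Nat.eq_dec k N) as [->|].
    + rewrite app_nth2 by lia. now rewrite Hlen, Nat.sub_diag.
    + rewrite app_nth1 by lia. specialize (Hl k ltac:(lia)).
      destruct (lt_dec k (length l)).
      * rewrite app_nth1 by (rewrite length_firstn; lia). rewrite nth_firstn.
        now destruct (Nat.ltb_spec k N); [|lia].
      * rewrite app_nth2 by (rewrite length_firstn; lia). rewrite nth_repeat.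
        now rewrite nth_overflow in Hl by lia.
Qed.

Lemma bits_union_exists (g : nat -> nat) (sel : nat -> bool) N :
  exists D, forall t, Nat.testbit D t = true <->
                      exists k, k < N /\ sel k = true /\ Nat.testbit (g k) t = true.
Proof.
  induction N as [|N [D HD]].
  - exists 0. intro t. rewrite Nat.bits_0. split; [discriminate | intros [k [Hk _]]; lia].
  - exists (Nat.lor D (if sel N then g N else 0)). intro t.
    rewrite Nat.lor_spec, orb_true_iff, HD. split.
    + intros [[k [Hk H]]|H]; [exists k; split; auto; lia|].
      destruct (sel N) eqn:E; [|now rewrite Nat.bits_0 in H]. exists N. auto.
    + intros [k [Hk [H1 H2]]]. destruct (Nat.eq_dec k N) as [->|].
      * right. now rewrite H1.
      * left. exists k. split; auto. lia.
Qed.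

Lemma Gamma_compose_sub a b Z n : Gamma (compose_index a b) Z n -> Gamma b (Gamma a Z) n.
Proof.
  intros [D [HW HD]]. unfold canon in HD. apply W_compose_index in HW. destruct HW as [w HW].
  apply Compose_spec in HW. destruct HW as [Hb Hk]. exists (cfst w). split.
  - apply W_iff_derivation. eexists. exact Hb.
  - intros k Hkb. destruct (Hk k (testbit_lt _ _ Hkb) Hkb) as [Hs Ha].
    exists (cfst (cnth (csnd (csnd w)) k)). split.
    + apply W_iff_derivation. eexists. exact Ha.
    + intros t Ht. apply HD, Hs; [apply testbit_lt|]; exact Ht.
Qed.

Lemma Gamma_compose_sup a b Z n : Gamma b (Gamma a Z) n -> Gamma (compose_index a b) Z n.
Proof.
  intros [E [Hb Hk]]. unfold canon in Hk. apply W_iff_derivation in Hb. destruct Hb as [wb Hwb].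
  destruct (list_choice (fun k v => Nat.testbit E k = true ->
      derivation_for (cnth (csnd (csnd v))) (cfst (csnd v)) a (cpair k (cfst v)) /\
      forall t, Nat.testbit (cfst v) t = true -> Z t) E) as [L HL].
  { intros k _. destruct (Nat.testbit E k) eqn:Ek; [|exists 0; discriminate].
    destruct (Hk k Ek) as [Dk [HW Hs]]. apply W_iff_derivation in HW. destruct HW as [wk Hwk].
    exists (cpair Dk wk). cpair_simpl. auto. }
  destruct (bits_union_exists (fun k => cfst (nth k L 0)) (Nat.testbit E) E) as [D HD].
  exists D. split.
  - apply W_compose_index. exists (cpair E (cpair wb (encode_env L))). apply Compose_spec.
    cpair_simpl. split; [exact Hwb|].
    intros k Hk1 Hk2. rewrite cnth_encode_env. destruct (HL k Hk1 Hk2) as [HC _]. split.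
    + intros t _ Ht. apply HD. exists k. auto.
    + exact HC.
  - intros t Ht. unfold canon in Ht. apply HD in Ht. destruct Ht as [k [Hkk [H1 H2]]].
    destruct (HL k Hkk H1) as [_ Hs]. auto.
Qed.

Lemma Gamma_compose a b Z : Gamma (compose_index a b) Z = Gamma b (Gamma a Z).
Proof.
  apply eset_ext. intro n. split; [apply Gamma_compose_sub | apply Gamma_compose_sup].
Qed.

(** * A computable uniformity function *)

Definition pad_index := encode (search_code PadZero).
Definition left_index := encode (search_code Left).
Definition up_index := encode (search_code Up).
Definition down_index := encode (search_code Down).
Definition apply_fst_index := encode (search_code (ApplySel Fst)).
Definition apply_snd_index := encode (search_code (ApplySel Snd)).

Lemma eequiv_via_pad A : eequiv_via A (join A (single 0)) (cpair pad_index left_index).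
Proof.
  exists pad_index, left_index. split; [reflexivity|].
  split; [apply Gamma_pad_zero | apply Gamma_left].
Qed.

Lemma eequiv_via_up A c :
  eequiv_via (join A (single c)) (join A (single (S c))) (cpair up_index down_index).
Proof.
  exists up_index, down_index. split; [reflexivity|]. split; [apply Gamma_up | apply Gamma_down].
Qed.

(* The pair [<i, j>] itself is stored in the join, so one fixed pair of
   operators performs every equivalence [A =e B via <i, j>]. *)
Lemma eequiv_via_apply A B i j : Gamma i A = B -> Gamma j B = A ->
  eequiv_via (join A (single (cpair i j))) (join B (single (cpair i j)))
             (cpair apply_fst_index apply_snd_index).
Proof.
  intros HAB HBA. exists apply_fst_index, apply_snd_index. split; [reflexivity|]. split.
  - unfold apply_fst_index. rewrite (Gamma_apply_sel Fst cfst (fun e env => eq_refl)).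
    now rewrite cfst_cpair, HAB.
  - unfold apply_snd_index. rewrite (Gamma_apply_sel Snd csnd (fun e env => eq_refl)).
    now rewrite csnd_cpair, HBA.
Qed.

Lemma eequiv_via_eequiv A B z : eequiv_via A B z -> eequiv A B.
Proof. intros [i [j [_ [H1 H2]]]]. split; [exists j | exists i]; auto. Qed.

Lemma eequiv_via_Gamma A B z : eequiv_via A B z -> Gamma (cfst z) A = B /\ Gamma (csnd z) B = A.
Proof. intros [i [j [-> [H1 H2]]]]. now cpair_simpl. Qed.

Lemma closed_eequiv_join X Y c : closed_eequiv X -> X Y -> X (join Y (single c)).
Proof.
  intros Hc HY. induction c as [|c IHc].
  - eapply Hc; [exact HY|]. eapply eequiv_via_eequiv. apply eequiv_via_pad.
  - eapply Hc; [exact IHc|]. eapply eequiv_via_eequiv. apply eequiv_via_up.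
Qed.

Definition ConstCodeIndex (x : expr) : expr :=
  Iter x (Const (encode CZero)) (Pair (Const 5) (Pair (Const (encode CSucc)) (Var 0))).

Lemma eval_ConstCodeIndex x env :
  eval_expr (ConstCodeIndex x) env = encode (const_code (eval_expr x env)).
Proof.
  unfold ConstCodeIndex. simpl. induction (eval_expr x env) as [|n IHn]; [reflexivity|].
  simpl. now rewrite IHn.
Qed.

Global Opaque ConstCodeIndex.

(* Stated separately so that no conversion check unfolds [cpair] on large numbers. *)
Lemma encode_CComp f g : encode (CComp f g) = cpair 5 (cpair (encode f) (encode g)).
Proof. reflexivity. Qed.

Lemma encode_CPair f g : encode (CPair f g) = cpair 4 (cpair (encode f) (encode g)).
Proof. reflexivity. Qed.

Definition ComposeIndex (x y : expr) : expr :=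
  Pair (Const 5) (Pair (Const (encode (search_code Compose)))
    (Pair (Const 4) (Pair (Pair (Const 4) (Pair (ConstCodeIndex x) (ConstCodeIndex y)))
                          (Const (encode id_code))))).

Lemma eval_ComposeIndex x y env :
  eval_expr (ComposeIndex x y) env = compose_index (eval_expr x env) (eval_expr y env).
Proof.
  unfold ComposeIndex, compose_index. cbn [eval_expr]. rewrite !eval_ConstCodeIndex.
  rewrite encode_CComp, !encode_CPair. reflexivity.
Qed.

Global Opaque ComposeIndex.

Lemma eval_IterCompose n i k env :
  eval_expr (Iter n i (ComposeIndex (Var 0) (Const k))) env =
  iter_idx (eval_expr n env) (eval_expr i env) (fun _ r => compose_index r k).
Proof.
  cbn [eval_expr]. apply iter_idx_ext. intros m r. rewrite eval_ComposeIndex. reflexivity.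
Qed.

Section Uniformity.

Variable u : nat -> nat.

Definition pad_fwd := cfst (u (cpair pad_index left_index)).
Definition pad_bwd := csnd (u (cpair pad_index left_index)).
Definition up_fwd := cfst (u (cpair up_index down_index)).
Definition up_bwd := csnd (u (cpair up_index down_index)).
Definition apply_fwd := cfst (u (cpair apply_fst_index apply_snd_index)).
Definition apply_bwd := csnd (u (cpair apply_fst_index apply_snd_index)).

Definition raise_index (c : nat) := iter_idx c pad_fwd (fun _ r => compose_index r up_fwd).

Definition lower_index (c s k : nat) :=
  iter_idx k (compose_index (raise_index c) s) (fun _ r => compose_index r up_bwd).

Definition uniform_index (ij : nat) : nat :=
  cpair (compose_index (lower_index ij apply_fwd ij) pad_bwd)
        (compose_index (lower_index ij apply_bwd ij) pad_bwd).

Definition Raise := Iter (Var 0) (Const pad_fwd) (ComposeIndex (Var 0) (Const up_fwd)).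
Definition Lower (s : nat) :=
  Iter (Var 0) (ComposeIndex Raise (Const s)) (ComposeIndex (Var 0) (Const up_bwd)).
Definition UniformIndex :=
  Pair (ComposeIndex (Lower apply_fwd) (Const pad_bwd))
       (ComposeIndex (Lower apply_bwd) (Const pad_bwd)).

Lemma eval_UniformIndex c : eval_expr UniformIndex [c] = uniform_index c.
Proof.
  unfold UniformIndex, uniform_index, Lower, lower_index, Raise, raise_index.
  change (eval_expr (Pair ?a ?b) [c]) with (cpair (eval_expr a [c]) (eval_expr b [c])).
  rewrite !eval_ComposeIndex, !eval_IterCompose, !eval_ComposeIndex, !eval_IterCompose.
  reflexivity.
Qed.

Definition uniform_code := CComp (compile UniformIndex) (CPair id_code CZero).

Lemma den_uniform_code n : den uniform_code n = uniform_index n.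
Proof.
  unfold uniform_code. cbn [den]. rewrite den_id_code.
  change (cpair n 0) with (encode_env [n]).
  rewrite compile_correct, eval_UniformIndex. reflexivity.
Qed.

Lemma uniform_index_computable : computable uniform_index.
Proof.
  exists uniform_code. intro n. rewrite <- den_uniform_code. apply eval_den.
  split; [apply mu_free_compile | split; [apply mu_free_helper_codes | exact I]].
Qed.

Variable X : eset -> Prop.
Variable f : eset -> eset.
Hypothesis X_closed : closed_eequiv X.
Hypothesis u_uniform : uniformity_function X f u.

Lemma Gamma_pad Y : X Y ->
  Gamma pad_fwd (f Y) = f (join Y (single 0)) /\ Gamma pad_bwd (f (join Y (single 0))) = f Y.
Proof.
  intro HY. apply eequiv_via_Gamma, u_uniform;
    [exact HY | now apply closed_eequiv_join | apply eequiv_via_pad].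
Qed.

Lemma Gamma_step Y c : X Y ->
  Gamma up_fwd (f (join Y (single c))) = f (join Y (single (S c))) /\
  Gamma up_bwd (f (join Y (single (S c)))) = f (join Y (single c)).
Proof.
  intro HY. apply eequiv_via_Gamma, u_uniform;
    [now apply closed_eequiv_join | now apply closed_eequiv_join | apply eequiv_via_up].
Qed.

Lemma Gamma_apply A B i j : X A -> X B -> Gamma i A = B -> Gamma j B = A ->
  Gamma apply_fwd (f (join A (single (cpair i j)))) = f (join B (single (cpair i j))) /\
  Gamma apply_bwd (f (join B (single (cpair i j)))) = f (join A (single (cpair i j))).
Proof.
  intros HA HB HAB HBA. apply eequiv_via_Gamma, u_uniform;
    [now apply closed_eequiv_join | now apply closed_eequiv_join | now apply eequiv_via_apply].
Qed.

Lemma Gamma_raise_index Y c : X Y -> Gamma (raise_index c) (f Y) = f (join Y (single c)).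
Proof.
  intro HY. induction c as [|c IHc].
  - exact (proj1 (Gamma_pad Y HY)).
  - change (raise_index (S c)) with (compose_index (raise_index c) up_fwd).
    rewrite Gamma_compose, IHc. exact (proj1 (Gamma_step Y c HY)).
Qed.

Lemma Gamma_lower_index Y Z c s k : X Y -> X Z -> k <= c ->
  Gamma s (f (join Y (single c))) = f (join Z (single c)) ->
  Gamma (lower_index c s k) (f Y) = f (join Z (single (c - k))).
Proof.
  intros HY HZ Hk Hs. induction k as [|k IHk].
  - change (lower_index c s 0) with (compose_index (raise_index c) s).
    rewrite Gamma_compose, Gamma_raise_index by exact HY. now rewrite Nat.sub_0_r.
  - change (lower_index c s (S k)) with (compose_index (lower_index c s k) up_bwd).
    rewrite Gamma_compose, IHk by lia.
    replace (c - k) with (S (c - S k)) by lia. exact (proj2 (Gamma_step Z _ HZ)).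
Qed.

Lemma uniform_index_spec : uniformity_function X f uniform_index.
Proof.
  intros A B i j HA HB [i' [j' [E [HAB HBA]]]].
  apply cpair_inj in E. destruct E as [<- <-].
  destruct (Gamma_apply A B i j HA HB HAB HBA) as [Hfwd Hbwd].
  exists (compose_index (lower_index (cpair i j) apply_fwd (cpair i j)) pad_bwd),
         (compose_index (lower_index (cpair i j) apply_bwd (cpair i j)) pad_bwd).
  split; [reflexivity|]. split.
  - rewrite Gamma_compose, (Gamma_lower_index A B _ _ _ HA HB (le_n _) Hfwd), Nat.sub_diag.
    exact (proj2 (Gamma_pad B HB)).
  - rewrite Gamma_compose, (Gamma_lower_index B A _ _ _ HB HA (le_n _) Hbwd), Nat.sub_diag.
    exact (proj2 (Gamma_pad A HA)).
Qed.

End Uniformity.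

Theorem lemma4p2 (X : eset -> Prop) (f : eset -> eset) :
  closed_eequiv X ->
  uniformly_e_invariant X f ->
  exists u : nat -> nat, computable u /\ uniformity_function X f u.
Proof.
  intros X_closed [u u_uniform]. exists (uniform_index u). split.
  - apply uniform_index_computable.
  - now apply uniform_index_spec.
Qed.
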